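(* Let $k\ge2$ and let $n$ be a perfect square. Let $\{u,v\}$ be an edge of $G_k$ with $u,v\in H_2$. Then for any two $k$-cliques $K,K'$ of $G_k$ with $u\in K$ and $v\in K'$, we have $K\overset{*}{\leftrightarrow}K'$ in the subgraph of $G_k$ induced by $\mathcal{B}(\{u,v\},k-1)$; that is, there is a sequence of $k$-cliques $K=K_1,K_2,\dots,K_s=K'$, all contained in $\mathcal{B}(\{u,v\},k-1)$, such that $|K_i\cap K_{i+1}|\ge k-1$ for every $i\in[s-1]$.
   Context: $\mathcal{B}(U,T)$ is the set of nodes of $G_k$ at distance at most $T$ from $U$. Let $n$ be a perfect square. $G_2$ is the $(\sqrt n\times\sqrt n)$ simple grid (node set $\{(i,j):i,j\in[\sqrt n]\}$, $(i,j)\sim(i',j')$ iff $|i-i'|+|j-j'|=1$), and $H_2=V(G_2)$. For $k\ge2$, $G_{k+1}$ is obtained from $G_k$ by adding, for each node $u\in V(G_k)$, a new node $u^*$ (the duplicate of $u$) adjacent exactly to $u$ and to all neighbors of $u$ in $G_k$; $H_{k+1}$ is the set of these new nodes, so $V(G_k)=H_2\cup\dots\cup H_k$. *)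

From mathcomp Require Import all_boot.
Set Implicit Arguments. Unset Strict Implicit. Unset Printing Implicit Defensive.

(* The grid has side m; n = m * m. A grid point is a pair of ordinals. *)
Definition gpt (m : nat) := ('I_m * 'I_m)%type.

Definition gridadj (m : nat) (p q : gpt m) : bool :=
  ((p.1 == q.1 :> nat) && ((p.2.+1 == q.2 :> nat) || (q.2.+1 == p.2 :> nat))) ||
  ((p.2 == q.2 :> nat) && ((p.1.+1 == q.1 :> nat) || (q.1.+1 == p.1 :> nat))).

(* A node of G_k is encoded as (p, s) with p a grid point and s a list of k-2
   booleans; the head of s records the last duplication step: a node of
   G_(k+1) is (p, false :: s) (the old node (p,s) of G_k) or (p, true :: s)
   (the duplicate (p,s)^* of the node (p,s) of G_k).  H_2 = nodes with s all
   false; H_(j+1) = nodes whose s has a true at position k-1-j (from the head). *)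
Fixpoint adjs (m : nat) (p q : gpt m) (s t : seq bool) : bool :=
  match s, t with
  | [::], [::] => gridadj p q
  | b :: s', c :: t' =>
      if b then
        (if c then false else ((p == q) && (s' == t')) || adjs p q s' t')
      else
        (if c then ((p == q) && (s' == t')) || adjs p q s' t' else adjs p q s' t')
  | _, _ => false
  end.

Definition node (m k : nat) := (gpt m * (k - 2).-tuple bool)%type.

Definition Gadj (m k : nat) (x y : node m k) : bool := adjs x.1 y.1 x.2 y.2.

Definition inH2 (m k : nat) (x : node m k) : bool := all (fun b => ~~ b) x.2.

Definition kclique (m k : nat) (K : {set node m k}) : Prop :=
  #|K| = k /\ (forall x y, x \in K -> y \in K -> x != y -> Gadj x y).

Definition inball (m k : nat) (U : {set node m k}) (T : nat) (y : node m k) : Prop :=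
  exists (x : node m k) (p : seq (node m k)),
    [/\ x \in U, path (@Gadj m k) x p, last x p = y & size p <= T].

(* A k-clique of G_2 is an edge, so K, {u,v}, K' is a chain.
   For the step, the duplicates are pairwise non-adjacent and every clique of
   G_k has at most k nodes, so a (k+1)-clique of G_(k+1) is L + x^* with L a
   k-clique of G_k and x in L.  A chain L_1, ..., L_s for the originals u, v
   lifts: L_i + a^* and L_i + b^* share L_i, and L_i + x^*, L_(i+1) + x^* share
   x^* for any x common to L_i and L_(i+1).  The radius grows by one because
   x^* is adjacent to x. *)
From mathcomp Require Import all_boot.
From mathcomp Require Import zify.
Set Implicit Arguments. Unset Strict Implicit.

Section DuplicationGraph.
Variable m : nat.

(* The nodes of G_(n+2). *)
Definition vtx n := (gpt m * n.-tuple bool)%type.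
Definition adj n : rel (vtx n) := fun x y => adjs x.1 y.1 x.2 y.2.
Definition old n (x : vtx n) : vtx n.+1 := (x.1, [tuple of false :: x.2]).
Definition dup n (x : vtx n) : vtx n.+1 := (x.1, [tuple of true :: x.2]).
Arguments old {n}. Arguments dup {n}.

Lemma adj_old n (x y : vtx n) : adj (old x) (old y) = adj x y.
Proof. by []. Qed.

Lemma adj_dup n (x y : vtx n) : adj (dup x) (dup y) = false.
Proof. by []. Qed.

Lemma adj_dup_old n (x y : vtx n) : adj (dup x) (old y) = (x == y) || adj x y.
Proof. by case: x y => [p s] [q t]; rewrite /adj /= xpair_eqE. Qed.

Lemma adj_old_dup n (x y : vtx n) : adj (old x) (dup y) = (x == y) || adj x y.
Proof. by case: x y => [p s] [q t]; rewrite /adj /= xpair_eqE. Qed.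

Lemma old_or_dup n (z : vtx n.+1) : {x | z = old x} + {x | z = dup x}.
Proof.
by case: z => p s; case/tupleP: s => b s; case: b; [right|left]; exists (p, s).
Qed.

Lemma old_inj n : injective (@old n).
Proof. by move=> [p s] [q t] [-> /val_inj ->]. Qed.

Lemma dup_inj n : injective (@dup n).
Proof. by move=> [p s] [q t] [-> /val_inj ->]. Qed.

Lemma old_neq_dup n (x y : vtx n) : old x != dup y.
Proof. by apply/negP => /eqP []. Qed.

Lemma gridadj_sym (p q : gpt m) : gridadj p q = gridadj q p.
Proof.
case: p q => [[a ?] [b ?]] [[c ?] [d ?]]; rewrite /gridadj /=.
by rewrite [c == a]eq_sym [d == b]eq_sym [(b.+1 == d) || _]orbC [(a.+1 == c) || _]orbC.
Qed.

Lemma adj_sym n (x y : vtx n) : adj x y = adj y x.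
Proof.
case: x y => [p s] [q t]; rewrite /adj /=; elim: (val s) (val t) => [|b s' IH] [|c t'] //=.
  exact: gridadj_sym.
by case: b; case: c; rewrite ?IH // [q == _]eq_sym [t' == _]eq_sym.
Qed.

Lemma gridadj_irr (p : gpt m) : gridadj p p = false.
Proof. by rewrite /gridadj !eqxx /=; apply/negP => /orP [] /orP [] /eqP; lia. Qed.

Lemma adj_irr n (x : vtx n) : adj x x = false.
Proof. by rewrite /adj; elim: (val x.2) => [|[] s IH] /=; rewrite ?gridadj_irr ?IH. Qed.

Lemma adj_neq n (x y : vtx n) : adj x y -> x != y.
Proof. by apply: contraTneq => ->; rewrite adj_irr. Qed.

Lemma gridadj_odd (p q : gpt m) : gridadj p q -> odd (p.1 + p.2) != odd (q.1 + q.2).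
Proof.
case: p q => [[a ha] [b hb]] [[c hc] [d hd]]; rewrite /gridadj /=.
case/orP => /andP [/eqP -> /orP [] /eqP <-];
  by rewrite ?addnS ?addSn /=; case: odd.
Qed.

Lemma adj0 (x y : vtx 0) : adj x y = gridadj x.1 y.1.
Proof. by case: x y => [p s] [q t]; rewrite /adj /= (tuple0 s) (tuple0 t). Qed.

Definition clique n (K : {set vtx n}) :=
  forall x y, x \in K -> y \in K -> x != y -> adj x y.

Definition oldpart n (K : {set vtx n.+1}) : {set vtx n} := [set x | old x \in K].
Definition duppart n (K : {set vtx n.+1}) : {set vtx n} := [set x | dup x \in K].

Lemma oldpart_duppartE n (K : {set vtx n.+1}) :
  K = old @: oldpart K :|: dup @: duppart K.
Proof.
apply/setP => z; rewrite in_setU; apply/idP/idP.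
  case: (old_or_dup z) => [[x ->]|[x ->]] hz.
    by rewrite imset_f ?inE.
  by rewrite orbC imset_f ?inE.
by case/orP => /imsetP [y]; rewrite inE => hy ->.
Qed.

Lemma card_oldpart_duppart n (K : {set vtx n.+1}) :
  #|K| <= #|oldpart K| + #|duppart K|.
Proof.
rewrite {1}[K]oldpart_duppartE cardsU.
by rewrite (card_imset _ (@old_inj n)) (card_imset _ (@dup_inj n)) leq_subr.
Qed.

Lemma clique_oldpart n (K : {set vtx n.+1}) : clique K -> clique (oldpart K).
Proof.
move=> hK x y; rewrite !inE => hx hy nxy; rewrite -adj_old.
by apply: hK hx hy _; apply: contra nxy => /eqP/old_inj ->.
Qed.

Lemma card_duppart_le1 n (K : {set vtx n.+1}) : clique K -> #|duppart K| <= 1.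
Proof.
move=> hK; apply/card_le1_eqP => x y; rewrite !inE => hx hy.
apply/eqP/negPn/negP => nxy; suff : adj (dup x) (dup y) by rewrite adj_dup.
by apply: hK hx hy _; apply: contra nxy => /eqP/dup_inj ->.
Qed.

Lemma clique_card_le n (K : {set vtx n}) : clique K -> #|K| <= n.+2.
Proof.
elim: n K => [|n IH] K hK.
  pose f (x : vtx 0) := odd (x.1.1 + x.1.2).
  rewrite -(card_in_imset (f := f)).
    by apply: leq_trans (max_card _) _; rewrite card_bool.
  move=> x y hx hy fxy; apply/eqP/negPn/negP => nxy.
  have := hK x y hx hy nxy; rewrite adj0 => /gridadj_odd.
  by rewrite /f in fxy; rewrite fxy eqxx.
apply: leq_trans (card_oldpart_duppart K) _; rewrite -addn1 leq_add //.
  exact: IH (clique_oldpart hK).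
exact: card_duppart_le1.
Qed.

Definition lift n (L : {set vtx n}) x : {set vtx n.+1} := dup x |: old @: L.

Lemma mem_lift_old n (L : {set vtx n}) x y : (old y \in lift L x) = (y \in L).
Proof. by rewrite !inE (negbTE (old_neq_dup _ _)) (mem_imset _ _ (@old_inj n)). Qed.

Lemma dup_notin_imset_old n (L : {set vtx n}) x : dup x \notin old @: L.
Proof. by apply/imsetP => -[y _ /eqP]; rewrite eq_sym (negbTE (old_neq_dup _ _)). Qed.

Lemma card_lift n (L : {set vtx n}) x : #|lift L x| = #|L|.+1.
Proof. by rewrite cardsU1 dup_notin_imset_old (card_imset _ (@old_inj n)). Qed.

Lemma clique_lift n (L : {set vtx n}) x : clique L -> x \in L -> clique (lift L x).
Proof.
move=> hL hx z1 z2; rewrite !inE.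
case/orP=> [/eqP ->|/imsetP [y1 hy1 ->]]; case/orP=> [/eqP ->|/imsetP [y2 hy2 ->]].
- by rewrite eqxx.
- by move=> _; rewrite adj_dup_old; case: eqP => //= /eqP; exact: hL.
- by move=> _; rewrite adj_old_dup; case: eqP => //= /eqP; exact: hL.
- by move=> ne; rewrite adj_old; apply: hL => //; apply: contra ne => /eqP ->.
Qed.

Lemma clique_decomp n (K : {set vtx n.+1}) : clique K -> #|K| = n.+3 ->
  exists L w, [/\ clique L, #|L| = n.+2, w \in L & K = lift L w].
Proof.
move=> hK cardK.
have hL := clique_oldpart hK; have cardL := clique_card_le hL.
have := card_oldpart_duppart K; have := card_duppart_le1 hK; rewrite cardK => hD hKD.
have cardD : #|duppart K| = 1 by lia.
have {}cardL : #|oldpart K| = n.+2 by lia.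
have /eqP/cards1P [w ew] := cardD.
have eK : K = lift (oldpart K) w by rewrite {1}[K]oldpart_duppartE ew imset_set1 setUC.
move: (oldpart K) hL cardL eK => L hL cardL eK; exists L, w; split => //.
(* otherwise w + L would be a clique of G_(n+2) with n+3 nodes *)
apply/negPn/negP => wL.
have adj_w y : y \in L -> adj w y.
  move=> hy; have wy : w != y by apply: contraNneq wL => ->.
  have := hK (dup w) (old y); rewrite eK mem_lift_old hy adj_dup_old (negbTE wy).
  by apply; rewrite ?setU11 // eq_sym old_neq_dup.
have hwL : clique (w |: L).
  move=> x y; rewrite !inE => /orP [/eqP ->|hx] /orP [/eqP ->|hy]; rewrite ?eqxx //.
  - by move=> _; exact: adj_w.
  - by move=> _; rewrite adj_sym; exact: adj_w.
  - exact: hL.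
by have := clique_card_le hwL; rewrite cardsU1 wL; lia.
Qed.

Definition ball n (U : {set vtx n}) r y := exists x p,
  [/\ x \in U, path (@adj n) x p, last x p = y & size p <= r].

Lemma ball_le n (U : {set vtx n}) r r' y : r <= r' -> ball U r y -> ball U r' y.
Proof. by move=> h [x [p [? ? ? hs]]]; exists x, p; split => //; apply: leq_trans h. Qed.

Lemma old_mem_pair n (u v x : vtx n) :
  x \in [set u; v] -> old x \in [set old u; old v].
Proof. by rewrite !inE => /orP [] /eqP ->; rewrite eqxx ?orbT. Qed.

Lemma ball_old n (u v : vtx n) r y :
  ball [set u; v] r y -> ball [set old u; old v] r (old y).
Proof.
move=> [x [p [hx hp hl hs]]]; exists (old x), (map (@old n) p); split.
- exact: old_mem_pair.
- by rewrite path_map.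
- by rewrite last_map hl.
- by rewrite size_map.
Qed.

Lemma ball_dup n (u v : vtx n) r y :
  ball [set u; v] r y -> ball [set old u; old v] r.+1 (dup y).
Proof.
move=> [x [p [hx hp hl hs]]]; exists (old x), (rcons (map (@old n) p) (dup y)); split.
- exact: old_mem_pair.
- by rewrite rcons_path path_map hp last_map hl adj_old_dup eqxx.
- by rewrite last_rcons.
- by rewrite size_rcons size_map.
Qed.

Lemma ball_clique_nbr n (U K : {set vtx n}) u z :
  u \in U -> u \in K -> clique K -> z \in K -> ball U 1 z.
Proof.
move=> hu huK hK hz; case: (eqVneq u z) => [<-|ne]; first by exists u, [::].
by exists u, [:: z]; split => //=; rewrite hK.
Qed.

Definition near_clique n (U K : {set vtx n}) :=
  [/\ clique K, #|K| = n.+2 & forall z, z \in K -> ball U n.+1 z].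

Lemma near_clique_mem n (U K : {set vtx n}) u :
  u \in U -> u \in K -> clique K -> #|K| = n.+2 -> near_clique U K.
Proof.
by move=> hu huK hK cardK; split => // z hz; apply: ball_le (ball_clique_nbr hu huK hK hz).
Qed.

Lemma near_clique_lift n (u v : vtx n) L x : near_clique [set u; v] L -> x \in L ->
  near_clique [set old u; old v] (lift L x).
Proof.
move=> [hL cardL hb] hx; split; [exact: clique_lift | by rewrite card_lift cardL|].
move=> z; rewrite !inE => /orP [/eqP ->|/imsetP [y hy ->]]; first exact/ball_dup/hb.
exact: ball_le (ball_old (hb _ hy)).
Qed.

Definition overlap n : rel {set vtx n} := fun A B => n.+1 <= #|A :&: B|.

Lemma overlap0 (A B : {set vtx 0}) x : x \in A -> x \in B -> overlap A B.
Proof. by move=> xA xB; rewrite /overlap card_gt0; apply/set0Pn; exists x; rewrite inE xA. Qed.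

Lemma near_clique_edge (u v : vtx 0) : adj u v -> near_clique [set u; v] [set u; v].
Proof.
move=> huv; split; last by move=> z hz; apply: (ball_le (r := 0)) => //; exists z, [::].
  move=> x y; rewrite !inE => /orP [] /eqP -> /orP [] /eqP -> nxy //;
    by rewrite ?eqxx ?(adj_sym v u) in nxy *.
by rewrite cards2 adj_neq.
Qed.

Lemma overlap_lift_same n (L : {set vtx n}) a b :
  #|L| = n.+2 -> overlap (lift L a) (lift L b).
Proof.
move=> cardL; rewrite /overlap -cardL -(card_imset L (@old_inj n)).
by apply: subset_leq_card; rewrite subsetI !subsetUr.
Qed.

Lemma overlap_lift n (L L' : {set vtx n}) x :
  overlap L L' -> overlap (lift L x) (lift L' x).
Proof.
rewrite /overlap => h; apply: leq_trans (_ : #|lift (L :&: L') x| <= _).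
  by rewrite card_lift.
by apply: subset_leq_card; rewrite subsetI !setUS // imsetS // (subsetIl, subsetIr).
Qed.

End DuplicationGraph.

Definition chain_in (T : eqType) (P : T -> Prop) (r : rel T) K K' :=
  exists s, [/\ path r K s, last K s = K' & forall L, L \in K :: s -> P L].

Section Chains.
Variables (T : eqType) (P : T -> Prop) (r : rel T).

Lemma chain_in_refl K : P K -> chain_in P r K K.
Proof. by move=> hK; exists [::]; split => // L; rewrite inE => /eqP ->. Qed.

Lemma chain_in_cons K K1 K' : P K -> r K K1 -> chain_in P r K1 K' -> chain_in P r K K'.
Proof.
move=> hK hs [s [hp hl hP]]; exists (K1 :: s); split => //=; first by rewrite hs.
by move=> L; rewrite inE => /orP [/eqP ->|]; [|apply: hP].
Qed.

End Chains.

Arguments chain_in_refl {T P r K}.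

Lemma chain_in_lift m n (u v : vtx m n) (L L' : {set vtx m n}) a b :
  chain_in (near_clique [set u; v]) (@overlap m n) L L' -> a \in L -> b \in L' ->
  chain_in (near_clique [set old u; old v]) (@overlap m n.+1) (lift L a) (lift L' b).
Proof.
case=> s [hp <- hP]; elim: s L a hp hP => [|L1 s IH] L a /=.
  move=> _ hP ha hb; have gL := hP L (mem_head _ _); have [_ cardL _] := gL.
  apply: (chain_in_cons (near_clique_lift gL ha) (overlap_lift_same a b cardL)).
  exact: chain_in_refl (near_clique_lift gL hb).
case/andP=> hLL1 hp hP ha hb; have gL := hP L (mem_head _ _); have [_ cardL _] := gL.
have [x] : exists x, x \in L :&: L1.
  by apply/set0Pn; rewrite -card_gt0; apply: leq_trans hLL1.
rewrite inE => /andP [xL xL1].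
apply: (chain_in_cons (near_clique_lift gL ha) (overlap_lift_same a x cardL)).
apply: (chain_in_cons (near_clique_lift gL xL) (overlap_lift x hLL1)).
by apply: IH => // L0 h0; apply: hP; rewrite inE h0 orbT.
Qed.

Definition inH m n (x : vtx m n) := all (fun b => ~~ b) x.2.

Lemma inH_old m n (z : vtx m n.+1) : inH z -> exists z0, z = old z0 /\ inH z0.
Proof. by case: (old_or_dup z) => [[x ->]|[x ->]] // h; exists x. Qed.

Lemma clique_chain m n (u v : vtx m n) K K' :
  adj u v -> inH u -> inH v ->
  clique K -> #|K| = n.+2 -> clique K' -> #|K'| = n.+2 -> u \in K -> v \in K' ->
  chain_in (near_clique [set u; v]) (@overlap m n) K K'.
Proof.
elim: n u v K K' => [|n IH] u v K K' huv hu hv hK cardK hK' cardK' huK hvK'.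
  have uU : u \in [set u; v] by rewrite !inE eqxx.
  have vU : v \in [set u; v] by rewrite !inE eqxx orbT.
  have gK := near_clique_mem uU huK hK cardK.
  have gK' := near_clique_mem vU hvK' hK' cardK'.
  apply: chain_in_cons gK (overlap0 huK uU) _.
  exact: chain_in_cons (near_clique_edge huv) (overlap0 vU hvK') (chain_in_refl gK').
have [u0 [eu hu0]] := inH_old hu; have [v0 [ev hv0]] := inH_old hv.
have [L [w [hL cardL wL eK]]] := clique_decomp hK cardK.
have [L' [w' [hL' cardL' wL' eK']]] := clique_decomp hK' cardK'.
subst u v K K'; rewrite mem_lift_old in huK; rewrite mem_lift_old in hvK'.
exact: chain_in_lift (IH _ _ _ _ huv hu0 hv0 hL cardL hL' cardL' huK hvK') wL wL'.
Qed.

Theorem mainTheorem18 (m k : nat) (u v : node m k) (K K' : {set node m k}) :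
  2 <= k ->
  Gadj u v -> inH2 u -> inH2 v ->
  kclique K -> kclique K' -> u \in K -> v \in K' ->
  exists Ks : seq {set node m k},
    [/\ head K Ks = K, last K Ks = K', Ks != [::],
        (forall L, L \in Ks -> kclique L /\
                   (forall z, z \in L -> inball [set u; v] (k - 1) z)) &
        path (fun A B => k - 1 <= #|A :&: B|) K (behead Ks)].
Proof.
move=> hk huv hu hv [cardK hK] [cardK' hK'] huK hvK'.
have ek : k - 1 = (k - 2).+1 by lia.
have {}cardK : #|K| = (k - 2).+2 by rewrite cardK; lia.
have {}cardK' : #|K'| = (k - 2).+2 by rewrite cardK'; lia.
have [s [hp hl hP]] := clique_chain huv hu hv hK cardK hK' cardK' huK hvK'.
exists (K :: s); split => //; last by rewrite ek.
move=> L /hP [hL cardL hb]; split; first by split => //; rewrite cardL; lia.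
by rewrite ek.
Qed.
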